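(* Consider two spacecraft $i=1,2$ together with an assigned third spacecraft $3$, with the notation of the context (edge $(1,2)$, $\rho(1,2)=\rho(2,1)=3$). Let $k^\alpha_{12},k^\beta_{12}>0$ with $k^\alpha_{12}\neq k^\beta_{12}$, and set $k^\alpha_{21}=k^\alpha_{12}$ and $k^\beta_{21}=k^\beta_{12}$. Define $$\Psi_{12}=k^\alpha_{12}\Psi^\alpha_{12}+k^\beta_{12}\Psi^\beta_{12},\quad e_{12}=k^\alpha_{12}e^\alpha_{12}+k^\beta_{12}e^\beta_{12},\quad e_{21}=k^\alpha_{21}e^\alpha_{21}+k^\beta_{21}e^\beta_{21}.$$ Then, along any trajectory of the kinematics $\dot R_i=R_i\hat\Omega_i$ ($i=1,2$): (i) $e_{12}=-Q^d_{21}e_{21}$, and hence $\|e_{12}\|=\|e_{21}\|$. (ii) $\frac{d}{dt}\Psi_{12}=e_{12}\cdot e_{\Omega_1}+e_{21}\cdot e_{\Omega_2}$. (iii) $\|\dot e_{12}\|\le (k^\alpha_{12}+k^\beta_{12})(\|e_{\Omega_1}\|+\|e_{\Omega_2}\|)+B^d\|e_{12}\|$ and $\|\dot e_{21}\|\le (k^\alpha_{12}+k^\beta_{12})(\|e_{\Omega_1}\|+\|e_{\Omega_2}\|)+B^d\|e_{21}\|$. (iv) If $\Psi_{12}\le\psi<2\min\{k^\alpha_{12},k^\beta_{12}\}$ for a constant $\psi$, then $$\underline\psi_{12}\|e_{12}\|^2\le\Psi_{12}\le\overline\psi_{12}\|e_{12}\|^2,$$ where $$\underline\psi_{12}=\frac{\min\{k^\alpha_{12},k^\beta_{12}\}}{2\max\{(k^\alpha_{12})^2,(k^\beta_{12})^2,(k^\alpha_{12}-k^\beta_{12})^2\}+2(k^\alpha_{12}+k^\beta_{12})^2},$$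 $$\overline\psi_{12}=\frac{\min\{k^\alpha_{12},k^\beta_{12}\}\,(k^\alpha_{12}+k^\beta_{12})}{\min\{(k^\alpha_{12})^2,(k^\beta_{12})^2\}\,\bigl(2\min\{k^\alpha_{12},k^\beta_{12}\}-\psi\bigr)}.$$
   Context: Notation: $\mathsf{SO}(3)=\{R\in\mathbb{R}^{3\times3}: R^TR=I,\ \det R=1\}$. The hat map $\hat{\cdot}:\mathbb{R}^3\to\mathfrak{so}(3)$ is defined by $\hat x y=x\times y$. $\|\cdot\|$ is the Euclidean norm, and $x\cdot y=x^Ty$. Spacecraft $i$ is a rigid body with attitude $R_i(t)\in\mathsf{SO}(3)$, which maps body-frame to inertial-frame coordinates. Its body angular velocity is $\Omega_i(t)\in\mathbb{R}^3$, and $\dot R_i=R_i\hat\Omega_i$. The spacecraft positions $p_i\in\mathbb{R}^3$ are fixed in the inertial frame. Set $s_{ij}=(p_j-p_i)/\|p_j-p_i\|$; these are constant unit vectors with $s_{ji}=-s_{ij}$. The line-of-sight measurement of spacecraft $j$ from spacecraft $i$, expressed in the body frame of $i$, is $b_{ij}=R_i^Ts_{ij}$. Set $b_{ijk}=b_{ij}\times b_{ik}$ and $s_{ijk}=s_{ij}\times s_{ik}$. The relative attitude is $Q_{ij}=R_j^TR_i$. For an edge $(i,j)$, a third spacecraft $k=\rho(i,j)=\rho(j,i)$ is assigned, with $p_i,p_j,p_k$ not collinear. Put $a_{ij}=a_{ji}=\|b_{ijk}\|\,\|b_{jik}\|$; this is a nonzero constant. A desired relative attitude $Q^d_{ij}:[0,\infty)\to\mathsf{SO}(3)$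 is smooth, with $\dot Q^d_{ij}=Q^d_{ij}\hat\Omega^d_{ij}$ and $Q^d_{ji}=(Q^d_{ij})^T$. Desired absolute angular velocities $\Omega^d_i(t)$ are $C^1$ functions chosen so that $\Omega^d_{ij}=\Omega^d_i-Q^d_{ji}\Omega^d_j$ for each edge, and $\|\Omega^d_i(t)\|\le B^d$ for all $t\ge0$, for a known constant $B^d>0$. The angular velocity error is $e_{\Omega_i}=\Omega_i-\Omega^d_i$. Error variables for $(i,j,k)$ with $k=\rho(i,j)$: $\Psi^\alpha_{ij}=1+b_{ji}\cdot Q^d_{ij}b_{ij}$, $\Psi^\beta_{ij}=1+\frac{1}{a_{ij}}\,b_{jik}\cdot Q^d_{ij}b_{ijk}$, $e^\alpha_{ij}=(Q^d_{ji}b_{ji})\times b_{ij}$, $e^\beta_{ij}=\frac{1}{a_{ij}}(Q^d_{ji}b_{jik})\times b_{ijk}$. With gains $k^\alpha_{ij}=k^\alpha_{ji}>0$ and $k^\beta_{ij}=k^\beta_{ji}>0$, set $\Psi_{ij}=k^\alpha_{ij}\Psi^\alpha_{ij}+k^\beta_{ij}\Psi^\beta_{ij}$ and $e_{ij}=k^\alpha_{ij}e^\alpha_{ij}+k^\beta_{ij}e^\beta_{ij}$. *)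

From Stdlib Require Import Reals.
Open Scope R_scope.

Record vec3 := mkV { vx : R; vy : R; vz : R }.

Definition vadd (u v : vec3) : vec3 := mkV (vx u + vx v) (vy u + vy v) (vz u + vz v).
Definition vopp (u : vec3) : vec3 := mkV (- vx u) (- vy u) (- vz u).
Definition vsub (u v : vec3) : vec3 := vadd u (vopp v).
Definition vscale (a : R) (u : vec3) : vec3 := mkV (a * vx u) (a * vy u) (a * vz u).
Definition dot (u v : vec3) : R := vx u * vx v + vy u * vy v + vz u * vz v.
Definition cross (u v : vec3) : vec3 :=
  mkV (vy u * vz v - vz u * vy v) (vz u * vx v - vx u * vz v) (vx u * vy v - vy u * vx v).
Definition norm (u : vec3) : R := sqrt (dot u u).
Definition vzero : vec3 := mkV 0 0 0.

Record mat3 := mkM { row1 : vec3; row2 : vec3; row3 : vec3 }.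

Definition mv (M : mat3) (v : vec3) : vec3 := mkV (dot (row1 M) v) (dot (row2 M) v) (dot (row3 M) v).
Definition mT (M : mat3) : mat3 :=
  mkM (mkV (vx (row1 M)) (vx (row2 M)) (vx (row3 M)))
      (mkV (vy (row1 M)) (vy (row2 M)) (vy (row3 M)))
      (mkV (vz (row1 M)) (vz (row2 M)) (vz (row3 M))).
(* row i of A*B is B^T (row i of A) *)
Definition mm (A B : mat3) : mat3 :=
  mkM (mv (mT B) (row1 A)) (mv (mT B) (row2 A)) (mv (mT B) (row3 A)).
Definition mid : mat3 := mkM (mkV 1 0 0) (mkV 0 1 0) (mkV 0 0 1).
Definition det3 (M : mat3) : R := dot (row1 M) (cross (row2 M) (row3 M)).
(* hat map: hat w y = w x y *)
Definition hat (w : vec3) : mat3 :=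
  mkM (mkV 0 (- vz w) (vy w)) (mkV (vz w) 0 (- vx w)) (mkV (- vy w) (vx w) 0).

Definition SO3 (M : mat3) : Prop := mm (mT M) M = mid /\ det3 M = 1.

Definition vderiv (f : R -> vec3) (v : vec3) (t : R) : Prop :=
  derivable_pt_lim (fun s => vx (f s)) t (vx v) /\
  derivable_pt_lim (fun s => vy (f s)) t (vy v) /\
  derivable_pt_lim (fun s => vz (f s)) t (vz v).
Definition mderiv (F : R -> mat3) (D : mat3) (t : R) : Prop :=
  vderiv (fun s => row1 (F s)) (row1 D) t /\
  vderiv (fun s => row2 (F s)) (row2 D) t /\
  vderiv (fun s => row3 (F s)) (row3 D) t.

Definition vC1_pos (f : R -> vec3) : Prop :=
  exists df : R -> vec3,
    forall t, 0 < t ->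
      vderiv f (df t) t /\
      continuity_pt (fun s => vx (df s)) t /\
      continuity_pt (fun s => vy (df s)) t /\
      continuity_pt (fun s => vz (df s)) t.

Definition sdir (pi pj : vec3) : vec3 := vscale (/ norm (vsub pj pi)) (vsub pj pi).
Definition bvec (Ri : mat3) (pi pj : vec3) : vec3 := mv (mT Ri) (sdir pi pj).
Definition bcross (Ri : mat3) (pi pj pk : vec3) : vec3 :=
  cross (bvec Ri pi pj) (bvec Ri pi pk).
Definition acoef (Ri Rj : mat3) (pi pj pk : vec3) : R :=
  norm (bcross Ri pi pj pk) * norm (bcross Rj pj pi pk).

Definition Psi_alpha (Qdij Ri Rj : mat3) (pi pj : vec3) : R :=
  1 + dot (bvec Rj pj pi) (mv Qdij (bvec Ri pi pj)).
Definition Psi_beta (Qdij Ri Rj : mat3) (pi pj pk : vec3) : R :=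
  1 + / acoef Ri Rj pi pj pk * dot (bcross Rj pj pi pk) (mv Qdij (bcross Ri pi pj pk)).
Definition e_alpha (Qdji Ri Rj : mat3) (pi pj : vec3) : vec3 :=
  cross (mv Qdji (bvec Rj pj pi)) (bvec Ri pi pj).
Definition e_beta (Qdji Ri Rj : mat3) (pi pj pk : vec3) : vec3 :=
  vscale (/ acoef Ri Rj pi pj pk)
         (cross (mv Qdji (bcross Rj pj pi pk)) (bcross Ri pi pj pk)).

Definition Psi_edge (ka kb : R) (Qdij Ri Rj : mat3) (pi pj pk : vec3) : R :=
  ka * Psi_alpha Qdij Ri Rj pi pj + kb * Psi_beta Qdij Ri Rj pi pj pk.
Definition e_edge (ka kb : R) (Qdji Ri Rj : mat3) (pi pj pk : vec3) : vec3 :=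
  vadd (vscale ka (e_alpha Qdji Ri Rj pi pj)) (vscale kb (e_beta Qdji Ri Rj pi pj pk)).

Definition collinear (p q r : vec3) : Prop := cross (vsub q p) (vsub r p) = vzero.

Definition psi_lower (ka kb : R) : R :=
  Rmin ka kb /
  (2 * Rmax (ka ^ 2) (Rmax (kb ^ 2) ((ka - kb) ^ 2)) + 2 * (ka + kb) ^ 2).
Definition psi_upper (ka kb psi : R) : R :=
  Rmin ka kb * (ka + kb) / (Rmin (ka ^ 2) (kb ^ 2) * (2 * Rmin ka kb - psi)).

From Stdlib Require Import Reals Lra Psatz.
Open Scope R_scope.

(* Because the attitudes are rotations, every measured quantity of an edge (i, j)
   is an inertial direction seen in a body frame: b_ij = R_i^T s_ij, and
   b_ijk / |b_ijk| = R_i^T n_i with n_i the unit normal at p_i of the plane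
   (p_i, p_j, p_k).  Hence Psi_ij and e_ij are the potential
   ka (1 + u.w) + kb (1 + u'.w') and the error ka u x w + kb u' x w' of the two
   orthonormal pairs (u, u') = Q^T R_j^T (s_ji, n_j) and (w, w') = R_i^T (s_ij, n_i).

   For
   orthonormal pairs, 0 <= Psi, |e|^2 <= 4 max(k) Psi and
   Psi (2 min(k) - Psi) <= |e|^2 (via a sum-of-squares certificate); these give
   part (iv).  Part (i) is the transport identity Q^T (Q v x u) = - Q^T u x v. *)

Lemma vec3_ext (u v : vec3) : vx u = vx v -> vy u = vy v -> vz u = vz v -> u = v.
Proof. destruct u, v; simpl; intros; subst; reflexivity. Qed.

(* Polynomial identities between coordinates: split every vector and matrix of
   the context into scalars and close the goal by [ring], componentwise. *)
Ltac coords := intros;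
  repeat match goal with
  | v : vec3 |- _ => revert v
  | M : mat3 |- _ => revert M end;
  repeat match goal with
  | |- forall _ : vec3, _ => intros [? ? ?]
  | |- forall _ : mat3, _ => intros [[? ? ?] [? ? ?] [? ? ?]]
  | |- forall _, _ => intro end;
  unfold vsub, mm, det3, mv, mT, hat, mid, cross, vadd, vopp, vscale, dot, vzero in *; simpl in *.
Ltac vec_ring := coords; try apply vec3_ext; simpl; ring.

Lemma dot_comm u v : dot u v = dot v u.
Proof. vec_ring. Qed.

Lemma dot_mv_T M u v : dot u (mv M v) = dot (mv (mT M) u) v.
Proof. vec_ring. Qed.

Lemma mv_add M u v : mv M (vadd u v) = vadd (mv M u) (mv M v).
Proof. vec_ring. Qed.

Lemma mv_sub M u v : mv M (vsub u v) = vsub (mv M u) (mv M v).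
Proof. vec_ring. Qed.

Lemma mv_scale M k u : mv M (vscale k u) = vscale k (mv M u).
Proof. vec_ring. Qed.

Lemma mv_mm A B u : mv (mm A B) u = mv A (mv B u).
Proof. vec_ring. Qed.

Lemma mv_mT_mm A B u : mv (mT (mm A B)) u = mv (mT B) (mv (mT A) u).
Proof. vec_ring. Qed.

Lemma mv_hat w u : mv (hat w) u = cross w u.
Proof. vec_ring. Qed.

Lemma mv_mT_hat w u : mv (mT (hat w)) u = cross u w.
Proof. vec_ring. Qed.

Lemma vscale1 u : vscale 1 u = u.
Proof. vec_ring. Qed.

Lemma mv_mid u : mv mid u = u.
Proof. vec_ring. Qed.

Lemma det3_mT M : det3 (mT M) = det3 M.
Proof. vec_ring. Qed.

Lemma mTT M : mT (mT M) = M.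
Proof. coords. reflexivity. Qed.

Lemma cross_scale a b x y : cross (vscale a x) (vscale b y) = vscale (a * b) (cross x y).
Proof. vec_ring. Qed.

Lemma mat3_ext (A B : mat3) : (forall u, mv A u = mv B u) -> A = B.
Proof.
  intros H. destruct A as [a1 a2 a3], B as [b1 b2 b3].
  pose proof (H (mkV 1 0 0)) as E1; pose proof (H (mkV 0 1 0)) as E2;
  pose proof (H (mkV 0 0 1)) as E3.
  unfold mv, dot in *; simpl in *. destruct a1, a2, a3, b1, b2, b3; simpl in *.
  injection E1; injection E2; injection E3; intros. f_equal; f_equal; lra.
Qed.

(** * Rotations *)

Definition cofactor (M : mat3) : mat3 :=
  mkM (cross (row2 M) (row3 M)) (cross (row3 M) (row1 M)) (cross (row1 M) (row2 M)).

Lemma sum_squares_zero (x y z : R) : x ^ 2 + y ^ 2 + z ^ 2 = 0 -> x = 0 /\ y = 0 /\ z = 0.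
Proof. intros; repeat split; nra. Qed.

(* For each column c of M, the distance
   between c and the cross product of the two other columns expands into a sum of
   squares that vanishes by orthonormality of the columns and [det M = 1]; the
   row identities then follow. *)
Lemma so3_cofactor (M : mat3) : SO3 M -> cofactor M = M.
Proof.
  destruct M as [[a b c] [d e f] [g h i]].
  unfold SO3, det3, mm, mT, mv, mid, cross, dot; simpl. intros [Horth Hdet].
  injection Horth; intros H33 H32 H31 H23 H22 H21 H13 H12 H11.
  assert (C1 : (a - (e*i - h*f))^2 + (d - (h*c - b*i))^2 + (g - (b*f - e*c))^2 = 0) by nra.
  assert (C2 : (b - (f*g - i*d))^2 + (e - (i*a - c*g))^2 + (h - (c*d - f*a))^2 = 0) by nra.
  assert (C3 : (c - (d*h - g*e))^2 + (f - (g*b - a*h))^2 + (i - (a*e - d*b))^2 = 0) by nra.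
  apply sum_squares_zero in C1; apply sum_squares_zero in C2; apply sum_squares_zero in C3.
  unfold cofactor, cross; simpl. f_equal; apply vec3_ext; simpl; lra.
Qed.

Lemma cross_mv_cofactor M u v : cross (mv M u) (mv M v) = mv (cofactor M) (cross u v).
Proof. vec_ring. Qed.

Lemma adjugate_l M u : mv (mT (cofactor M)) (mv M u) = vscale (det3 M) u.
Proof. unfold det3, cofactor. vec_ring. Qed.

Lemma adjugate_r M u : mv M (mv (mT (cofactor M)) u) = vscale (det3 M) u.
Proof. unfold det3, cofactor. vec_ring. Qed.

Section Rotation.
Variable M : mat3.
Hypothesis HM : SO3 M.

Lemma so3_cross u v : cross (mv M u) (mv M v) = mv M (cross u v).
Proof. rewrite cross_mv_cofactor, (so3_cofactor M HM). reflexivity. Qed.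

Lemma so3_TM u : mv (mT M) (mv M u) = u.
Proof.
  pose proof (adjugate_l M u) as E. rewrite (so3_cofactor M HM) in E.
  rewrite E, (proj2 HM). apply vscale1.
Qed.

Lemma so3_MT u : mv M (mv (mT M) u) = u.
Proof.
  pose proof (adjugate_r M u) as E. rewrite (so3_cofactor M HM) in E.
  rewrite E, (proj2 HM). apply vscale1.
Qed.

Lemma so3_dot u v : dot (mv M u) (mv M v) = dot u v.
Proof. rewrite dot_comm, dot_mv_T, so3_TM. apply dot_comm. Qed.

Lemma so3_transpose : SO3 (mT M).
Proof.
  split.
  - rewrite mTT. apply mat3_ext; intro u. rewrite mv_mm, so3_MT, mv_mid. reflexivity.
  - rewrite det3_mT. apply HM.
Qed.

End Rotation.

Lemma dot_ge0 u : 0 <= dot u u.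
Proof. coords. nra. Qed.

Lemma norm_ge0 u : 0 <= norm u.
Proof. apply sqrt_pos. Qed.

Lemma norm_sq u : norm u ^ 2 = dot u u.
Proof. unfold norm. rewrite <- Rsqr_pow2. apply Rsqr_sqrt, dot_ge0. Qed.

Lemma norm_le_of_sq x B : 0 <= B -> dot x x <= B ^ 2 -> norm x <= B.
Proof. intros HB H. unfold norm. rewrite <- (sqrt_pow2 B HB). apply sqrt_le_1_alt, H. Qed.

Lemma norm_pos u : u <> vzero -> 0 < norm u.
Proof.
  intros Hu. destruct (norm_ge0 u) as [|Hn]; [assumption|]. exfalso; apply Hu.
  assert (E : dot u u = 0) by (rewrite <- norm_sq, <- Hn; ring).
  revert E; coords. apply vec3_ext; simpl; nra.
Qed.

Lemma lagrange u v : dot (cross u v) (cross u v) = dot u u * dot v v - (dot u v) ^ 2.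
Proof. vec_ring. Qed.

Lemma dot_le_norms u v : dot u v <= norm u * norm v.
Proof.
  pose proof (lagrange u v). pose proof (dot_ge0 (cross u v)).
  pose proof (norm_ge0 u); pose proof (norm_ge0 v).
  assert (dot u v ^ 2 <= (norm u * norm v) ^ 2) by (rewrite Rpow_mult_distr, !norm_sq; lra).
  destruct (Rle_lt_dec (dot u v) 0).
  { apply Rle_trans with 0; [assumption | apply Rmult_le_pos; assumption]. }
  apply Rsqr_incr_0_var; rewrite ?Rsqr_pow2; nra.
Qed.

Lemma norm_cross_le u v : norm (cross u v) <= norm u * norm v.
Proof.
  pose proof (norm_ge0 u); pose proof (norm_ge0 v).
  apply norm_le_of_sq; [nra|].
  rewrite lagrange, Rpow_mult_distr, !norm_sq. pose proof (pow2_ge_0 (dot u v)). lra.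
Qed.

Lemma norm_add_le u v : norm (vadd u v) <= norm u + norm v.
Proof.
  pose proof (norm_ge0 u); pose proof (norm_ge0 v); pose proof (dot_le_norms u v).
  apply norm_le_of_sq; [lra|].
  replace (dot (vadd u v) (vadd u v)) with (dot u u + 2 * dot u v + dot v v) by vec_ring.
  rewrite <- !norm_sq. nra.
Qed.

Lemma norm_scale k u : norm (vscale k u) = Rabs k * norm u.
Proof.
  unfold norm. replace (dot (vscale k u) (vscale k u)) with (k ^ 2 * dot u u) by vec_ring.
  rewrite sqrt_mult_alt by apply pow2_ge_0. rewrite <- Rsqr_pow2, sqrt_Rsqr_abs. reflexivity.
Qed.

Lemma norm_opp u : norm (vopp u) = norm u.
Proof. unfold norm. f_equal. vec_ring. Qed.

Lemma norm_so3 M u : SO3 M -> norm (mv M u) = norm u.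
Proof. intros HM. unfold norm. rewrite (so3_dot M HM). reflexivity. Qed.

Definition unit (n : vec3) : vec3 := vscale (/ norm n) n.

Lemma unit_dot n : n <> vzero -> dot (unit n) (unit n) = 1.
Proof.
  intros Hn. pose proof (norm_pos n Hn).
  unfold unit. replace (dot _ _) with ((/ norm n) ^ 2 * dot n n) by vec_ring.
  rewrite <- norm_sq. field. lra.
Qed.

(** * Differentiation of vector-valued functions *)

Lemma dlim_plus f g x a b : derivable_pt_lim f x a -> derivable_pt_lim g x b ->
  derivable_pt_lim (fun s => f s + g s) x (a + b).
Proof. apply (derivable_pt_lim_plus f g). Qed.

Lemma dlim_minus f g x a b : derivable_pt_lim f x a -> derivable_pt_lim g x b ->
  derivable_pt_lim (fun s => f s - g s) x (a - b).
Proof. apply (derivable_pt_lim_minus f g). Qed.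

Lemma dlim_mult f g x a b : derivable_pt_lim f x a -> derivable_pt_lim g x b ->
  derivable_pt_lim (fun s => f s * g s) x (a * g x + f x * b).
Proof. apply (derivable_pt_lim_mult f g). Qed.

Lemma dlim_scal k f x a : derivable_pt_lim f x a ->
  derivable_pt_lim (fun s => k * f s) x (k * a).
Proof. apply (derivable_pt_lim_scal f). Qed.

Lemma dlim_eq f x a b : derivable_pt_lim f x a -> a = b -> derivable_pt_lim f x b.
Proof. intros H <-; exact H. Qed.

Lemma vderiv_eq f a b t : vderiv f a t -> a = b -> vderiv f b t.
Proof. intros H <-; exact H. Qed.

(* Differentiate a polynomial in coordinates whose derivatives are hypotheses. *)
Ltac dlim_rules := repeat first
  [ apply dlim_minus | apply dlim_plus | apply dlim_mult | eassumption ].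

Lemma dlim_local f g t l : 0 < t -> (forall s, 0 <= s -> f s = g s) ->
  derivable_pt_lim g t l -> derivable_pt_lim f t l.
Proof.
  intros Ht Hfg Hg eps Heps. destruct (Hg eps Heps) as [d Hd].
  assert (Hpos : 0 < Rmin d t) by (apply Rmin_pos; [apply cond_pos | exact Ht]).
  exists (mkposreal _ Hpos). intros h Hh Hlt. simpl in Hlt.
  assert (Hh' : Rabs h < t) by (apply Rlt_le_trans with (1 := Hlt), Rmin_r).
  apply Rabs_def2 in Hh'.
  rewrite !Hfg by lra. apply Hd; [exact Hh|]. apply Rlt_le_trans with (1 := Hlt), Rmin_l.
Qed.

Lemma vderiv_local f g d t : 0 < t -> (forall s, 0 <= s -> f s = g s) ->
  vderiv g d t -> vderiv f d t.
Proof.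
  intros Ht Hfg (H1 & H2 & H3).
  repeat split; (eapply dlim_local; [exact Ht | intros s Hs; rewrite Hfg by exact Hs;
    reflexivity | assumption]).
Qed.

Lemma dlim_dot u v du dv t : vderiv u du t -> vderiv v dv t ->
  derivable_pt_lim (fun s => dot (u s) (v s)) t (dot du (v t) + dot (u t) dv).
Proof.
  intros (Hu1 & Hu2 & Hu3) (Hv1 & Hv2 & Hv3). unfold dot.
  eapply dlim_eq; [dlim_rules | cbv beta; ring].
Qed.

Lemma vderiv_cross u v du dv t : vderiv u du t -> vderiv v dv t ->
  vderiv (fun s => cross (u s) (v s)) (vadd (cross du (v t)) (cross (u t) dv)) t.
Proof.
  intros (Hu1 & Hu2 & Hu3) (Hv1 & Hv2 & Hv3). unfold vderiv, cross, vadd; simpl.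
  repeat split; (eapply dlim_eq; [dlim_rules | cbv beta; ring]).
Qed.

Lemma vderiv_mv M D v dv t : mderiv M D t -> vderiv v dv t ->
  vderiv (fun s => mv (M s) (v s)) (vadd (mv D (v t)) (mv (M t) dv)) t.
Proof.
  intros (H1 & H2 & H3) Hv. unfold vderiv; unfold mv at 1; unfold vadd; simpl.
  repeat split; (eapply dlim_eq; [apply dlim_dot; eassumption | unfold mv; simpl; ring]).
Qed.

Lemma mderiv_mT M D t : mderiv M D t -> mderiv (fun s => mT (M s)) (mT D) t.
Proof.
  intros ((H11 & H12 & H13) & (H21 & H22 & H23) & (H31 & H32 & H33)).
  repeat split; assumption.
Qed.

Lemma vderiv_const c t : vderiv (fun _ => c) vzero t.
Proof. repeat split; apply derivable_pt_lim_const. Qed.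

Lemma vderiv_add u v du dv t : vderiv u du t -> vderiv v dv t ->
  vderiv (fun s => vadd (u s) (v s)) (vadd du dv) t.
Proof.
  intros (Hu1 & Hu2 & Hu3) (Hv1 & Hv2 & Hv3).
  repeat split; apply dlim_plus; assumption.
Qed.

Lemma vderiv_scale k u du t : vderiv u du t ->
  vderiv (fun s => vscale k (u s)) (vscale k du) t.
Proof. intros (Hu1 & Hu2 & Hu3). repeat split; apply dlim_scal; assumption. Qed.

Lemma body_vector_deriv (Rf : R -> mat3) W x t : mderiv Rf (mm (Rf t) (hat W)) t ->
  vderiv (fun s => mv (mT (Rf s)) x) (cross (mv (mT (Rf t)) x) W) t.
Proof.
  intros H. eapply vderiv_eq; [apply vderiv_mv; [apply mderiv_mT, H | apply vderiv_const]|].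
  rewrite mv_mT_mm, mv_mT_hat. generalize (mv (mT (Rf t)) x). clear. vec_ring.
Qed.

(** * Relative attitude kinematics *)

(* If X and Y rotate with angular velocities wd + a and wd + b
   (dX = X x (wd + a), dY = Y x (wd + b)), then
   d(X x Y) = (X x Y) x wd + misalignment_rate X Y a b: this is the part of the
   rate not explained by the common rotation wd. *)
Definition misalignment_rate (X Y a b : vec3) : vec3 :=
  vadd (cross (cross X a) Y) (cross X (cross Y b)).

Lemma misalignment_rate_bound X Y a b :
  norm (misalignment_rate X Y a b) <= norm X * norm Y * (norm a + norm b).
Proof.
  unfold misalignment_rate.
  pose proof (norm_cross_le (cross X a) Y); pose proof (norm_cross_le X a).
  pose proof (norm_cross_le X (cross Y b)); pose proof (norm_cross_le Y b).
  pose proof (norm_ge0 X); pose proof (norm_ge0 Y); pose proof (norm_ge0 a);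
  pose proof (norm_ge0 b); pose proof (norm_ge0 (cross X a)); pose proof (norm_ge0 (cross Y b)).
  eapply Rle_trans; [apply norm_add_le|].
  assert (norm (cross (cross X a) Y) <= norm X * norm a * norm Y).
  { eapply Rle_trans; [eassumption|]. apply Rmult_le_compat_r; assumption. }
  assert (norm (cross X (cross Y b)) <= norm X * (norm Y * norm b)).
  { eapply Rle_trans; [eassumption|]. apply Rmult_le_compat_l; assumption. }
  nra.
Qed.

(* The two potentials and errors attached to a pair of line-of-sight directions
   ([u] with [w]) and a pair of plane normals ([u'] with [w']). *)
Definition pair_potential (ka kb : R) (u u' w w' : vec3) : R :=
  ka * (1 + dot u w) + kb * (1 + dot u' w').
Definition pair_error (ka kb : R) (u u' w w' : vec3) : vec3 :=
  vadd (vscale ka (cross u w)) (vscale kb (cross u' w')).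

(* Frames i and j rotate with body angular velocities [Wi], [Wj]; [P] is a
   desired relative attitude carrying j-body coordinates to i-body coordinates,
   whose desired relative angular velocity is [Wdi - P Wdj].  A fixed inertial
   vector [x] seen in frame j and transported by [P] is compared with a fixed
   inertial vector [y] seen in frame i. *)
Section RelativeKinematics.
Variables (Ri Rj P : R -> mat3) (DP : mat3) (Wi Wj Wdi Wdj : vec3) (t : R).
Hypothesis HRi : mderiv Ri (mm (Ri t) (hat Wi)) t.
Hypothesis HRj : mderiv Rj (mm (Rj t) (hat Wj)) t.
Hypothesis HP : mderiv P DP t.
Hypothesis HDP : forall z, mv DP z = cross (mv (P t) z) (vsub Wdi (mv (P t) Wdj)).
Hypothesis HPso : SO3 (P t).

Lemma transported_deriv x :
  vderiv (fun s => mv (P s) (mv (mT (Rj s)) x))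
    (cross (mv (P t) (mv (mT (Rj t)) x)) (vadd Wdi (mv (P t) (vsub Wj Wdj)))) t.
Proof.
  eapply vderiv_eq; [apply vderiv_mv; [exact HP | apply body_vector_deriv, HRj]|].
  rewrite HDP, <- (so3_cross _ HPso), mv_sub.
  generalize (mv (P t) (mv (mT (Rj t)) x)) (mv (P t) Wj) (mv (P t) Wdj). clear. vec_ring.
Qed.

Lemma transported_cross_deriv x y :
  vderiv (fun s => cross (mv (P s) (mv (mT (Rj s)) x)) (mv (mT (Ri s)) y))
    (vadd (cross (cross (mv (P t) (mv (mT (Rj t)) x)) (mv (mT (Ri t)) y)) Wdi)
          (misalignment_rate (mv (P t) (mv (mT (Rj t)) x)) (mv (mT (Ri t)) y)
             (mv (P t) (vsub Wj Wdj)) (vsub Wi Wdi))) t.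
Proof.
  eapply vderiv_eq;
    [apply vderiv_cross; [apply transported_deriv | apply body_vector_deriv, HRi]|].
  unfold misalignment_rate.
  generalize (mv (P t) (mv (mT (Rj t)) x)) (mv (mT (Ri t)) y) (mv (P t) (vsub Wj Wdj)).
  clear. vec_ring.
Qed.

(* The alignment [X . Y] changes only through the two angular velocity errors;
   the part due to frame j is best expressed back in frame j. *)
Lemma transported_dot_deriv x y :
  derivable_pt_lim (fun s => dot (mv (P s) (mv (mT (Rj s)) x)) (mv (mT (Ri s)) y)) t
    (dot (cross (mv (P t) (mv (mT (Rj t)) x)) (mv (mT (Ri t)) y)) (vsub Wi Wdi) +
     dot (cross (mv (mT (P t)) (mv (mT (Ri t)) y)) (mv (mT (Rj t)) x)) (vsub Wj Wdj)).
Proof.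
  eapply dlim_eq;
    [apply dlim_dot; [apply transported_deriv | apply body_vector_deriv, HRi]|].
  cbv beta. set (X := mv (mT (Rj t)) x); set (Y := mv (mT (Ri t)) y); clearbody X Y.
  assert (Back : dot (cross (mv (mT (P t)) Y) X) (vsub Wj Wdj) =
                 - dot (cross (mv (P t) X) Y) (mv (P t) (vsub Wj Wdj))).
  { rewrite dot_mv_T, <- (so3_cross _ (so3_transpose _ HPso)), (so3_TM _ HPso).
    generalize (mv (mT (P t)) Y) (vsub Wj Wdj). clear. vec_ring. }
  rewrite Back. generalize (mv (P t) X) (mv (P t) (vsub Wj Wdj)). clear. vec_ring.
Qed.

Lemma pair_potential_deriv ka kb x x' y y' :
  derivable_pt_lim (fun s => pair_potential ka kb
      (mv (P s) (mv (mT (Rj s)) x)) (mv (P s) (mv (mT (Rj s)) x'))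
      (mv (mT (Ri s)) y) (mv (mT (Ri s)) y')) t
    (dot (pair_error ka kb (mv (P t) (mv (mT (Rj t)) x)) (mv (P t) (mv (mT (Rj t)) x'))
            (mv (mT (Ri t)) y) (mv (mT (Ri t)) y')) (vsub Wi Wdi) +
     dot (pair_error ka kb (mv (mT (P t)) (mv (mT (Ri t)) y)) (mv (mT (P t)) (mv (mT (Ri t)) y'))
            (mv (mT (Rj t)) x) (mv (mT (Rj t)) x')) (vsub Wj Wdj)).
Proof.
  unfold pair_potential.
  eapply dlim_eq.
  { apply dlim_plus; apply dlim_scal; apply dlim_plus;
      (apply derivable_pt_lim_const || apply transported_dot_deriv). }
  unfold pair_error.
  generalize (cross (mv (P t) (mv (mT (Rj t)) x)) (mv (mT (Ri t)) y))
    (cross (mv (P t) (mv (mT (Rj t)) x')) (mv (mT (Ri t)) y'))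
    (cross (mv (mT (P t)) (mv (mT (Ri t)) y)) (mv (mT (Rj t)) x))
    (cross (mv (mT (P t)) (mv (mT (Ri t)) y')) (mv (mT (Rj t)) x')).
  clear. vec_ring.
Qed.

Lemma pair_error_deriv ka kb Bd x x' y y' :
  SO3 (Ri t) -> SO3 (Rj t) -> norm x = 1 -> norm x' = 1 -> norm y = 1 -> norm y' = 1 ->
  0 <= ka -> 0 <= kb -> norm Wdi <= Bd ->
  exists dE,
    vderiv (fun s => pair_error ka kb
      (mv (P s) (mv (mT (Rj s)) x)) (mv (P s) (mv (mT (Rj s)) x'))
      (mv (mT (Ri s)) y) (mv (mT (Ri s)) y')) dE t /\
    norm dE <= (ka + kb) * (norm (vsub Wi Wdi) + norm (vsub Wj Wdj)) +
      Bd * norm (pair_error ka kb (mv (P t) (mv (mT (Rj t)) x)) (mv (P t) (mv (mT (Rj t)) x'))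
                   (mv (mT (Ri t)) y) (mv (mT (Ri t)) y')).
Proof.
  intros HSi HSj Hx Hx' Hy Hy' Hka Hkb HB.
  pose proof (so3_transpose _ HSi) as HTi; pose proof (so3_transpose _ HSj) as HTj.
  eexists; split.
  { unfold pair_error. apply vderiv_add; apply vderiv_scale; apply transported_cross_deriv. }
  set (ej := mv (P t) (vsub Wj Wdj)); set (ei := vsub Wi Wdi).
  assert (Hrate : forall u v, norm u = 1 -> norm v = 1 ->
            norm (misalignment_rate (mv (P t) (mv (mT (Rj t)) u)) (mv (mT (Ri t)) v) ej ei)
            <= norm ei + norm (vsub Wj Wdj)).
  { intros u v Hu Hv. eapply Rle_trans; [apply misalignment_rate_bound|].
    unfold ej. rewrite !norm_so3 by assumption. rewrite Hu, Hv. lra. }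
  set (E := pair_error ka kb (mv (P t) (mv (mT (Rj t)) x)) (mv (P t) (mv (mT (Rj t)) x'))
              (mv (mT (Ri t)) y) (mv (mT (Ri t)) y')).
  set (A := misalignment_rate (mv (P t) (mv (mT (Rj t)) x)) (mv (mT (Ri t)) y) ej ei).
  set (A' := misalignment_rate (mv (P t) (mv (mT (Rj t)) x')) (mv (mT (Ri t)) y') ej ei).
  assert (HA : norm A <= norm ei + norm (vsub Wj Wdj)) by (apply Hrate; assumption).
  assert (HA' : norm A' <= norm ei + norm (vsub Wj Wdj)) by (apply Hrate; assumption).
  assert (Split : vadd (vscale ka (vadd (cross (cross (mv (P t) (mv (mT (Rj t)) x))
                                                      (mv (mT (Ri t)) y)) Wdi) A))
                       (vscale kb (vadd (cross (cross (mv (P t) (mv (mT (Rj t)) x'))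
                                                      (mv (mT (Ri t)) y')) Wdi) A')) =
                  vadd (cross E Wdi) (vadd (vscale ka A) (vscale kb A'))).
  { unfold E, pair_error. clearbody A A'.
    generalize (cross (mv (P t) (mv (mT (Rj t)) x)) (mv (mT (Ri t)) y))
      (cross (mv (P t) (mv (mT (Rj t)) x')) (mv (mT (Ri t)) y')).
    clear. vec_ring. }
  rewrite Split.
  pose proof (norm_cross_le E Wdi); pose proof (norm_add_le (vscale ka A) (vscale kb A')).
  pose proof (norm_add_le (cross E Wdi) (vadd (vscale ka A) (vscale kb A'))).
  rewrite !norm_scale, !Rabs_pos_eq in * by assumption.
  pose proof (norm_ge0 E); pose proof (norm_ge0 Wdi).
  nra.
Qed.

End RelativeKinematics.

(** * The potential controls the error: the static estimates *)

Definition orthonormal_pair (u u' : vec3) : Prop :=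
  dot u u = 1 /\ dot u' u' = 1 /\ dot u u' = 0.

Lemma orthonormal_pair_so3 M u u' : SO3 M -> orthonormal_pair u u' ->
  orthonormal_pair (mv M u) (mv M u').
Proof. intros HM H. unfold orthonormal_pair. rewrite !(so3_dot M HM). exact H. Qed.

Lemma orthonormal_expansion u u' x y : orthonormal_pair u u' ->
  dot x y = dot u x * dot u y + dot u' x * dot u' y + dot (cross u u') x * dot (cross u u') y.
Proof.
  intros (Hu & Hu' & Huu').
  assert (G : dot (cross u u') x * dot (cross u u') y =
     dot x y * (dot u u * dot u' u' - dot u u' ^ 2)
     - dot u x * (dot u y * dot u' u' - dot u u' * dot u' y)
     + dot u' x * (dot u y * dot u u' - dot u u * dot u' y)) by (clear; vec_ring).
  rewrite Hu, Hu', Huu' in G. lra.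
Qed.

(* If (a, c, p) and (b, d, q) are orthonormal, then bc <= (1 + a)(1 + d): an
   explicit sum-of-squares certificate for this entry inequality of a rotation. *)
Lemma orthonormal_entries_bound (a b c d p q : R) :
  a * a + c * c + p * p = 1 -> b * b + d * d + q * q = 1 -> a * b + c * d + p * q = 0 ->
  b * c <= (1 + a) * (1 + d).
Proof.
  intros H0 H1 H2.
  set (X := 1 + a + d + a * d - b * c).
  assert (E : 4 * X - X * X - (c * q - p * d - p) ^ 2 - (p * b - a * q - q) ^ 2 - (b - c) ^ 2 =
     (-1 - q ^ 2 - 2 * d - d ^ 2 - b ^ 2) * (a * a + c * c + p * p - 1)
     + (-2 - 2 * a) * (b * b + d * d + q * q - 1)
     + (p * q + 2 * c + c * d + 2 * b + a * b) * (a * b + c * d + p * q)) by (unfold X; ring).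
  rewrite H0, H1, H2 in E.
  pose proof (pow2_ge_0 (c * q - p * d - p)); pose proof (pow2_ge_0 (p * b - a * q - q)).
  pose proof (pow2_ge_0 (b - c)); pose proof (Rle_0_sqr X). unfold Rsqr in *.
  assert (0 <= X) by lra. unfold X in *. lra.
Qed.

Lemma pair_error_sq ka kb u u' w w' :
  orthonormal_pair u u' -> orthonormal_pair w w' ->
  dot (pair_error ka kb u u' w w') (pair_error ka kb u u' w w') = ka ^ 2 * (1 - dot u w ^ 2) + kb ^ 2 * (1 - dot u' w' ^ 2)
            - 2 * ka * kb * (dot u w' * dot u' w).
Proof.
  intros (Hu & Hu' & Huu') (Hw & Hw' & Hww').
  assert (Id : dot (pair_error ka kb u u' w w') (pair_error ka kb u u' w w') = ka ^ 2 * (dot u u * dot w w - dot u w ^ 2)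
      + kb ^ 2 * (dot u' u' * dot w' w' - dot u' w' ^ 2)
      + 2 * ka * kb * (dot u u' * dot w w' - dot u w' * dot u' w))
    by (unfold pair_error; clear; vec_ring).
  rewrite Id, Hu, Hu', Huu', Hw, Hw', Hww'. ring.
Qed.

Lemma pair_bounds ka kb u u' w w' : 0 < ka -> 0 < kb ->
  orthonormal_pair u u' -> orthonormal_pair w w' ->
  let P := pair_potential ka kb u u' w w' in
  let e := pair_error ka kb u u' w w' in
  0 <= P /\ dot e e <= 4 * Rmax ka kb * P /\ P * (2 * Rmin ka kb - P) <= dot e e.
Proof.
  intros Hka Hkb Huu Hww P e.
  pose proof (pair_error_sq ka kb u u' w w' Huu Hww) as Ee. fold e in Ee.
  pose proof (orthonormal_expansion u u' w w Huu) as E1.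
  pose proof (orthonormal_expansion u u' w' w' Huu) as E2.
  pose proof (orthonormal_expansion u u' w w' Huu) as E3.
  pose proof (orthonormal_expansion w w' u u Hww) as B1.
  pose proof (orthonormal_expansion w w' u' u' Hww) as B2.
  pose proof (pow2_ge_0 (dot (cross w w') u)); pose proof (pow2_ge_0 (dot (cross w w') u')).
  destruct Huu as (Hu & Hu' & _); destruct Hww as (Hw & Hw' & Hww').
  rewrite ?(dot_comm w u), ?(dot_comm w' u), ?(dot_comm w u'), ?(dot_comm w' u') in *.
  set (a := dot u w) in *; set (b := dot u w') in *; set (c := dot u' w) in *;
  set (d := dot u' w') in *; set (p := dot (cross u u') w) in *;
  set (q := dot (cross u u') w') in *.
  assert (HX : b * c <= (1 + a) * (1 + d)) by (apply (orthonormal_entries_bound a b c d p q); nra).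
  assert (HP : P = ka * (1 + a) + kb * (1 + d)) by reflexivity.
  assert (Ha : -1 <= a <= 1) by nra. assert (Hd : -1 <= d <= 1) by nra.
  pose proof (Rmax_l ka kb); pose proof (Rmax_r ka kb);
  pose proof (Rmin_l ka kb); pose proof (Rmin_r ka kb).
  split; [|split]; rewrite ?Ee, HP.
  - nra.
  - assert (-(2 * ka * kb * (b * c)) <= ka ^ 2 * (c * c) + kb ^ 2 * (b * b))
      by (pose proof (pow2_ge_0 (ka * c + kb * b)); nra).
    assert (ka ^ 2 * (1 - a ^ 2) <= 2 * ka ^ 2 * (1 + a))
      by (pose proof (Rmult_le_pos _ _ (pow2_ge_0 ka) (pow2_ge_0 (1 + a))); nra).
    assert (kb ^ 2 * (1 - d ^ 2) <= 2 * kb ^ 2 * (1 + d))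
      by (pose proof (Rmult_le_pos _ _ (pow2_ge_0 kb) (pow2_ge_0 (1 + d))); nra).
    assert (ka ^ 2 * (c * c) <= ka ^ 2 * (1 - a ^ 2)) by nra.
    assert (kb ^ 2 * (b * b) <= kb ^ 2 * (1 - d ^ 2)) by nra.
    assert (ka ^ 2 * (1 + a) <= Rmax ka kb * (ka * (1 + a)))
      by (replace (ka ^ 2 * (1 + a)) with (ka * (ka * (1 + a))) by ring;
          apply Rmult_le_compat_r; nra).
    assert (kb ^ 2 * (1 + d) <= Rmax ka kb * (kb * (1 + d)))
      by (replace (kb ^ 2 * (1 + d)) with (kb * (kb * (1 + d))) by ring;
          apply Rmult_le_compat_r; nra).
    nra.
  - assert (2 * ka * kb * (b * c) <= 2 * ka * kb * ((1 + a) * (1 + d)))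
      by (apply Rmult_le_compat_l; [nra | exact HX]).
    assert (Rmin ka kb * (ka * (1 + a)) <= ka * (ka * (1 + a)))
      by (apply Rmult_le_compat_r; nra).
    assert (Rmin ka kb * (kb * (1 + d)) <= kb * (kb * (1 + d)))
      by (apply Rmult_le_compat_r; nra).
    nra.
Qed.

Lemma potential_error_equivalence ka kb psi P E : 0 < ka -> 0 < kb ->
  0 <= P -> 0 <= E -> E <= 4 * Rmax ka kb * P -> P * (2 * Rmin ka kb - P) <= E ->
  P <= psi -> psi < 2 * Rmin ka kb ->
  psi_lower ka kb * E <= P /\ P <= psi_upper ka kb psi * E.
Proof.
  intros Hka Hkb HP HE Hup Hlow Hpsi Hlt. unfold psi_lower, psi_upper.
  assert (Hm : 0 < Rmin ka kb) by (apply Rmin_pos; lra).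
  assert (HmM : Rmin ka kb * Rmax ka kb = ka * kb).
  { destruct (Rle_dec ka kb).
    - rewrite Rmin_left, Rmax_right by lra. ring.
    - rewrite Rmin_right, Rmax_left by lra. ring. }
  assert (Hm2 : Rmin (ka ^ 2) (kb ^ 2) = Rmin ka kb ^ 2).
  { destruct (Rle_dec ka kb).
    - rewrite !Rmin_left by nra; reflexivity.
    - rewrite !Rmin_right by nra; reflexivity. }
  assert (Hmk : Rmin ka kb <= ka + kb) by (pose proof (Rmin_l ka kb); lra).
  assert (HMp : 0 < Rmax ka kb) by (pose proof (Rmax_l ka kb); lra).
  rewrite Hm2.
  set (m := Rmin ka kb) in *; set (M := Rmax ka kb) in *.
  set (D := 2 * Rmax (ka ^ 2) (Rmax (kb ^ 2) ((ka - kb) ^ 2)) + 2 * (ka + kb) ^ 2).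
  assert (HD : 4 * (m * M) <= D).
  { unfold D. pose proof (Rmax_l (ka ^ 2) (Rmax (kb ^ 2) ((ka - kb) ^ 2))).
    pose proof (pow2_ge_0 ka); pose proof (pow2_ge_0 (ka - kb)). rewrite HmM. nra. }
  assert (HDp : 0 < D) by nra.
  split.
  - apply (Rmult_le_reg_r D); [exact HDp|].
    replace (m / D * E * D) with (m * E) by (field; lra).
    assert (m * E <= m * (4 * M * P)) by (apply Rmult_le_compat_l; lra).
    nra.
  - assert (Hd : 0 < 2 * m - psi) by lra.
    assert (HPE : P * (2 * m - psi) <= E).
    { eapply Rle_trans; [|exact Hlow]. apply Rmult_le_compat_l; lra. }
    apply (Rmult_le_reg_r (m ^ 2 * (2 * m - psi))); [apply Rmult_lt_0_compat; nra|].
    replace (m * (ka + kb) / (m ^ 2 * (2 * m - psi)) * E * (m ^ 2 * (2 * m - psi)))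
      with (m * (ka + kb) * E) by (field; split; nra).
    assert (m * (ka + kb) * (P * (2 * m - psi)) <= m * (ka + kb) * E)
      by (apply Rmult_le_compat_l; nra).
    assert (0 <= P * (2 * m - psi)) by nra.
    assert (m * m * (P * (2 * m - psi)) <= m * (ka + kb) * (P * (2 * m - psi)))
      by (apply Rmult_le_compat_r; [lra | apply Rmult_le_compat_l; lra]).
    nra.
Qed.

(** * Line-of-sight geometry *)

Definition unit_normal (pi pj pk : vec3) : vec3 := unit (cross (sdir pi pj) (sdir pi pk)).

Definition edge_nondegenerate (pi pj pk : vec3) : Prop :=
  cross (sdir pi pj) (sdir pi pk) <> vzero /\ cross (sdir pj pi) (sdir pj pk) <> vzero.

Lemma vscale_nonzero k v : k <> 0 -> v <> vzero -> vscale k v <> vzero.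
Proof.
  intros Hk Hv H. apply Hv.
  assert (E : v = vscale (/ k) (vscale k v)) by (clear H Hv; coords; apply vec3_ext; simpl; field; exact Hk).
  rewrite E, H. vec_ring.
Qed.

Lemma noncollinear_edge p1 p2 p3 : ~ collinear p1 p2 p3 ->
  edge_nondegenerate p1 p2 p3 /\ edge_nondegenerate p2 p1 p3.
Proof.
  unfold collinear. intros H.
  assert (H21 : vsub p2 p1 <> vzero) by (intros E; apply H; rewrite E; vec_ring).
  assert (H31 : vsub p3 p1 <> vzero) by (intros E; apply H; rewrite E; vec_ring).
  assert (H12 : vsub p1 p2 <> vzero).
  { intros E. apply H21. replace (vsub p2 p1) with (vopp (vsub p1 p2)) by vec_ring.
    rewrite E. vec_ring. }
  assert (H32 : vsub p3 p2 <> vzero).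
  { intros E. apply H. replace (vsub p3 p1) with (vadd (vsub p3 p2) (vsub p2 p1)) by vec_ring.
    rewrite E. vec_ring. }
  assert (Hinv : forall p q, vsub q p <> vzero -> / norm (vsub q p) <> 0).
  { intros p q Hpq. apply Rinv_neq_0_compat. pose proof (norm_pos _ Hpq). lra. }
  assert (N1 : cross (sdir p1 p2) (sdir p1 p3) <> vzero).
  { unfold sdir. rewrite cross_scale.
    apply vscale_nonzero; [apply Rmult_integral_contrapositive; split; auto | exact H]. }
  assert (N2 : cross (sdir p2 p1) (sdir p2 p3) <> vzero).
  { unfold sdir. rewrite cross_scale.
    apply vscale_nonzero; [apply Rmult_integral_contrapositive; split; auto|].
    replace (cross (vsub p1 p2) (vsub p3 p2)) with (vopp (cross (vsub p2 p1) (vsub p3 p1)))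
      by vec_ring.
    intros E. apply H. replace (cross (vsub p2 p1) (vsub p3 p1))
      with (vopp (vopp (cross (vsub p2 p1) (vsub p3 p1)))) by vec_ring.
    rewrite E. vec_ring. }
  unfold edge_nondegenerate. tauto.
Qed.

Lemma line_of_sight_frame pi pj pk : cross (sdir pi pj) (sdir pi pk) <> vzero ->
  orthonormal_pair (sdir pi pj) (unit_normal pi pj pk).
Proof.
  intros Hn. unfold orthonormal_pair, unit_normal. split; [|split].
  - assert (Hs : vsub pj pi <> vzero).
    { intros E. apply Hn. unfold sdir at 1. rewrite E. vec_ring. }
    apply (unit_dot _ Hs).
  - apply (unit_dot _ Hn).
  - unfold unit. generalize (/ norm (cross (sdir pi pj) (sdir pi pk))). vec_ring.
Qed.

Lemma orthonormal_pair_norms u u' : orthonormal_pair u u' -> norm u = 1 /\ norm u' = 1.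
Proof. intros (Hu & Hu' & _). unfold norm. rewrite Hu, Hu', sqrt_1. split; reflexivity. Qed.

Lemma bcross_body Ri pi pj pk : SO3 Ri ->
  bcross Ri pi pj pk = mv (mT Ri) (cross (sdir pi pj) (sdir pi pk)).
Proof. intros H. apply (so3_cross _ (so3_transpose _ H)). Qed.

Lemma acoef_body Ri Rj pi pj pk : SO3 Ri -> SO3 Rj ->
  acoef Ri Rj pi pj pk =
  norm (cross (sdir pi pj) (sdir pi pk)) * norm (cross (sdir pj pi) (sdir pj pk)).
Proof.
  intros Hi Hj. unfold acoef. rewrite !bcross_body by assumption.
  rewrite !norm_so3 by (apply so3_transpose; assumption). reflexivity.
Qed.

(* Since the attitudes are rotations, the normalisation by a_ij turns the
   measured plane normals into rotated unit normals: Psi_ij and e_ij are the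
   potential and error of the pairs (line of sight, unit normal) at i and j. *)
Lemma edge_potential_body ka kb Q Ri Rj pi pj pk : SO3 Ri -> SO3 Rj ->
  Psi_edge ka kb Q Ri Rj pi pj pk =
  pair_potential ka kb (mv (mT Q) (mv (mT Rj) (sdir pj pi)))
    (mv (mT Q) (mv (mT Rj) (unit_normal pj pi pk)))
    (mv (mT Ri) (sdir pi pj)) (mv (mT Ri) (unit_normal pi pj pk)).
Proof.
  intros Hi Hj. unfold Psi_edge, Psi_alpha, Psi_beta, pair_potential, bvec, unit_normal, unit.
  rewrite acoef_body, !bcross_body by assumption. rewrite !(dot_mv_T Q), !mv_scale, Rinv_mult.
  generalize (/ norm (cross (sdir pi pj) (sdir pi pk))) (/ norm (cross (sdir pj pi) (sdir pj pk))).
  generalize (mv (mT Q) (mv (mT Rj) (sdir pj pi))) (mv (mT Ri) (sdir pi pj))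
    (mv (mT Q) (mv (mT Rj) (cross (sdir pj pi) (sdir pj pk))))
    (mv (mT Ri) (cross (sdir pi pj) (sdir pi pk))).
  clear. vec_ring.
Qed.

Lemma edge_error_body ka kb Q Ri Rj pi pj pk : SO3 Ri -> SO3 Rj ->
  e_edge ka kb Q Ri Rj pi pj pk =
  pair_error ka kb (mv Q (mv (mT Rj) (sdir pj pi))) (mv Q (mv (mT Rj) (unit_normal pj pi pk)))
    (mv (mT Ri) (sdir pi pj)) (mv (mT Ri) (unit_normal pi pj pk)).
Proof.
  intros Hi Hj. unfold e_edge, e_alpha, e_beta, pair_error, bvec, unit_normal, unit.
  rewrite acoef_body, !bcross_body by assumption. rewrite !mv_scale, Rinv_mult.
  generalize (/ norm (cross (sdir pi pj) (sdir pi pk))) (/ norm (cross (sdir pj pi) (sdir pj pk))).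
  generalize (mv Q (mv (mT Rj) (sdir pj pi))) (mv (mT Ri) (sdir pi pj))
    (mv Q (mv (mT Rj) (cross (sdir pj pi) (sdir pj pk))))
    (mv (mT Ri) (cross (sdir pi pj) (sdir pi pk))).
  clear. vec_ring.
Qed.

Lemma cross_transport Q a b : SO3 Q ->
  cross (mv (mT Q) a) b = vopp (mv (mT Q) (cross (mv Q b) a)).
Proof.
  intros HQ. rewrite <- (so3_cross _ (so3_transpose _ HQ)), (so3_TM _ HQ).
  generalize (mv (mT Q) a). clear. vec_ring.
Qed.

(* Part (i): the two errors of an edge are opposite, up to the desired relative
   attitude (this holds for arbitrary attitudes, since a_ij = a_ji). *)
Lemma edge_error_swap ka kb Q Ri Rj pi pj pk : SO3 Q ->
  e_edge ka kb (mT Q) Ri Rj pi pj pk = vopp (mv (mT Q) (e_edge ka kb Q Rj Ri pj pi pk)).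
Proof.
  intros HQ. unfold e_edge, e_alpha, e_beta.
  replace (acoef Rj Ri pj pi pk) with (acoef Ri Rj pi pj pk) by (unfold acoef; ring).
  rewrite mv_add, !mv_scale, !(cross_transport Q _ _ HQ).
  generalize (mv (mT Q) (cross (mv Q (bvec Ri pi pj)) (bvec Rj pj pi)))
    (mv (mT Q) (cross (mv Q (bcross Ri pi pj pk)) (bcross Rj pj pi pk))).
  clear. vec_ring.
Qed.

Lemma edge_potential_bounds ka kb Q Ri Rj pi pj pk : 0 < ka -> 0 < kb ->
  SO3 Q -> SO3 Ri -> SO3 Rj -> edge_nondegenerate pi pj pk ->
  let P := Psi_edge ka kb Q Ri Rj pi pj pk in
  let e := e_edge ka kb (mT Q) Ri Rj pi pj pk in
  0 <= P /\ dot e e <= 4 * Rmax ka kb * P /\ P * (2 * Rmin ka kb - P) <= dot e e.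
Proof.
  intros Hka Hkb HQ Hi Hj [Ni Nj] P e. unfold P, e.
  rewrite edge_potential_body, edge_error_body by assumption.
  pose proof (so3_transpose _ HQ); pose proof (so3_transpose _ Hi);
  pose proof (so3_transpose _ Hj).
  apply pair_bounds; auto; repeat apply orthonormal_pair_so3; auto;
    apply line_of_sight_frame; assumption.
Qed.

(* The desired relative attitude Q (dQ = Q Wd^, Wd = Wd1 - Q^T Wd2) and its
   transpose are relative attitudes in the sense of [RelativeKinematics]. *)
Lemma desired_transpose_rate Q W Wd1 Wd2 z : W = vsub Wd1 (mv (mT Q) Wd2) ->
  mv (mT (mm Q (hat W))) z = cross (mv (mT Q) z) (vsub Wd1 (mv (mT Q) Wd2)).
Proof. intros ->. rewrite mv_mT_mm, mv_mT_hat. reflexivity. Qed.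

Lemma desired_rate Q W Wd1 Wd2 z : SO3 Q -> W = vsub Wd1 (mv (mT Q) Wd2) ->
  mv (mm Q (hat W)) z = cross (mv Q z) (vsub Wd2 (mv Q Wd1)).
Proof.
  intros HQ ->. rewrite mv_mm, mv_hat, <- (so3_cross _ HQ), mv_sub, (so3_MT _ HQ).
  generalize (mv Q Wd1) (mv Q z). clear. vec_ring.
Qed.

Section Edge.
Variables (ka kb : R) (Ri Rj : R -> mat3) (pi pj pk : vec3) (Wi Wj Wdi Wdj : vec3) (t : R).
Hypothesis Ht : 0 < t.
Hypothesis Hnd : edge_nondegenerate pi pj pk.
Hypothesis HSi : forall s, 0 <= s -> SO3 (Ri s).
Hypothesis HSj : forall s, 0 <= s -> SO3 (Rj s).
Hypothesis HRi : mderiv Ri (mm (Ri t) (hat Wi)) t.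
Hypothesis HRj : mderiv Rj (mm (Rj t) (hat Wj)) t.

Lemma edge_potential_deriv (Q : R -> mat3) (Wd : vec3) :
  SO3 (Q t) -> mderiv Q (mm (Q t) (hat Wd)) t -> Wd = vsub Wdi (mv (mT (Q t)) Wdj) ->
  derivable_pt_lim (fun s => Psi_edge ka kb (Q s) (Ri s) (Rj s) pi pj pk) t
    (dot (e_edge ka kb (mT (Q t)) (Ri t) (Rj t) pi pj pk) (vsub Wi Wdi) +
     dot (e_edge ka kb (Q t) (Rj t) (Ri t) pj pi pk) (vsub Wj Wdj)).
Proof.
  intros HQ HdQ HWd. assert (Ht0 : 0 <= t) by lra.
  eapply dlim_local; [exact Ht | intros s Hs; apply edge_potential_body; auto|].
  eapply dlim_eq.
  { apply (pair_potential_deriv Ri Rj (fun s => mT (Q s)) (mT (mm (Q t) (hat Wd))));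
      [exact HRi | exact HRj | apply mderiv_mT, HdQ
      | intros z; apply desired_transpose_rate, HWd | apply so3_transpose, HQ]. }
  rewrite !edge_error_body, mTT by auto. reflexivity.
Qed.

Lemma edge_error_deriv Bd (P : R -> mat3) (DP : mat3) :
  0 < ka -> 0 < kb -> SO3 (P t) -> mderiv P DP t ->
  (forall z, mv DP z = cross (mv (P t) z) (vsub Wdi (mv (P t) Wdj))) -> norm Wdi <= Bd ->
  exists dE, vderiv (fun s => e_edge ka kb (P s) (Ri s) (Rj s) pi pj pk) dE t /\
    norm dE <= (ka + kb) * (norm (vsub Wi Wdi) + norm (vsub Wj Wdj)) +
               Bd * norm (e_edge ka kb (P t) (Ri t) (Rj t) pi pj pk).
Proof.
  intros Hka Hkb HP HdP HDP HB. assert (Ht0 : 0 <= t) by lra.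
  destruct Hnd as [Ni Nj].
  destruct (orthonormal_pair_norms _ _ (line_of_sight_frame _ _ _ Ni)) as [Hs Hn].
  destruct (orthonormal_pair_norms _ _ (line_of_sight_frame _ _ _ Nj)) as [Hs' Hn'].
  destruct (pair_error_deriv Ri Rj P DP Wi Wj Wdi Wdj t HRi HRj HdP HDP HP ka kb Bd
              (sdir pj pi) (unit_normal pj pi pk) (sdir pi pj) (unit_normal pi pj pk))
    as [dE [HdE Hbound]]; auto; try lra.
  exists dE. rewrite edge_error_body by auto. split; [|exact Hbound].
  eapply vderiv_local; [exact Ht | intros s Hs0; apply edge_error_body; auto | exact HdE].
Qed.

End Edge.

Theorem proposition1
  (p1 p2 p3 : vec3)
  (R1 R2 R3 : R -> mat3)
  (Om1 Om2 Omd1 Omd2 Omd12 : R -> vec3)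
  (Qd12 : R -> mat3)
  (ka kb Bd : R)
  (Hncol : ~ collinear p1 p2 p3)
  (HSO1 : forall t, 0 <= t -> SO3 (R1 t))
  (HSO2 : forall t, 0 <= t -> SO3 (R2 t))
  (HSO3 : forall t, 0 <= t -> SO3 (R3 t))
  (Hkin1 : forall t, 0 < t -> mderiv R1 (mm (R1 t) (hat (Om1 t))) t)
  (Hkin2 : forall t, 0 < t -> mderiv R2 (mm (R2 t) (hat (Om2 t))) t)
  (HQso : forall t, 0 <= t -> SO3 (Qd12 t))
  (HQd : forall t, 0 < t -> mderiv Qd12 (mm (Qd12 t) (hat (Omd12 t))) t)
  (HOmd12 : forall t, 0 <= t -> Omd12 t = vsub (Omd1 t) (mv (mT (Qd12 t)) (Omd2 t)))
  (HC1_1 : vC1_pos Omd1) (HC1_2 : vC1_pos Omd2)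
  (HBd : 0 < Bd)
  (HB1 : forall t, 0 <= t -> norm (Omd1 t) <= Bd)
  (HB2 : forall t, 0 <= t -> norm (Omd2 t) <= Bd)
  (Hka : 0 < ka) (Hkb : 0 < kb) (Hkab : ka <> kb) :
  let Psi12 := fun t => Psi_edge ka kb (Qd12 t) (R1 t) (R2 t) p1 p2 p3 in
  let e12 := fun t => e_edge ka kb (mT (Qd12 t)) (R1 t) (R2 t) p1 p2 p3 in
  let e21 := fun t => e_edge ka kb (Qd12 t) (R2 t) (R1 t) p2 p1 p3 in
  let eOm1 := fun t => vsub (Om1 t) (Omd1 t) in
  let eOm2 := fun t => vsub (Om2 t) (Omd2 t) in
  (* (i) *)
  (forall t, 0 <= t ->
     e12 t = vopp (mv (mT (Qd12 t)) (e21 t)) /\ norm (e12 t) = norm (e21 t)) /\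
  (* (ii) *)
  (forall t, 0 < t ->
     derivable_pt_lim Psi12 t (dot (e12 t) (eOm1 t) + dot (e21 t) (eOm2 t))) /\
  (* (iii) *)
  (forall t, 0 < t ->
     exists de12 de21 : vec3,
       vderiv e12 de12 t /\
       norm de12 <= (ka + kb) * (norm (eOm1 t) + norm (eOm2 t)) + Bd * norm (e12 t) /\
       vderiv e21 de21 t /\
       norm de21 <= (ka + kb) * (norm (eOm1 t) + norm (eOm2 t)) + Bd * norm (e21 t)) /\
  (* (iv) *)
  (forall (psi t : R), 0 <= t -> Psi12 t <= psi -> psi < 2 * Rmin ka kb ->
     psi_lower ka kb * (norm (e12 t)) ^ 2 <= Psi12 t /\
     Psi12 t <= psi_upper ka kb psi * (norm (e12 t)) ^ 2).
Proof.
  cbv zeta. destruct (noncollinear_edge p1 p2 p3 Hncol) as [Hnd12 Hnd21].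
  split; [|split; [|split]].
  - intros t Ht. pose proof (edge_error_swap ka kb _ (R1 t) (R2 t) p1 p2 p3 (HQso t Ht)) as Hsw.
    split; [exact Hsw|]. rewrite Hsw, norm_opp. apply norm_so3, so3_transpose, HQso, Ht.
  - intros t Ht. assert (Ht0 : 0 <= t) by lra.
    apply (edge_potential_deriv ka kb R1 R2 p1 p2 p3 _ _ _ _ t Ht HSO1 HSO2 (Hkin1 t Ht)
             (Hkin2 t Ht) Qd12 (Omd12 t) (HQso t Ht0) (HQd t Ht) (HOmd12 t Ht0)).
  - intros t Ht. assert (Ht0 : 0 <= t) by lra.
    destruct (edge_error_deriv ka kb R1 R2 p1 p2 p3 _ _ (Omd1 t) (Omd2 t) t Ht Hnd12 HSO1 HSO2
        (Hkin1 t Ht) (Hkin2 t Ht) Bd (fun s => mT (Qd12 s)) _ Hka Hkb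
        (so3_transpose _ (HQso t Ht0)) (mderiv_mT _ _ _ (HQd t Ht))
        (fun z => desired_transpose_rate _ _ _ _ z (HOmd12 t Ht0)) (HB1 t Ht0))
      as [d12 [D12 B12]].
    destruct (edge_error_deriv ka kb R2 R1 p2 p1 p3 _ _ (Omd2 t) (Omd1 t) t Ht Hnd21 HSO2 HSO1
        (Hkin2 t Ht) (Hkin1 t Ht) Bd Qd12 _ Hka Hkb (HQso t Ht0) (HQd t Ht)
        (fun z => desired_rate _ _ _ _ z (HQso t Ht0) (HOmd12 t Ht0)) (HB2 t Ht0))
      as [d21 [D21 B21]].
    rewrite (Rplus_comm (norm (vsub (Om2 t) _))) in B21.
    exists d12, d21. tauto.
  - intros psi t Ht Hle Hlt. rewrite norm_sq.
    destruct (edge_potential_bounds ka kb (Qd12 t) (R1 t) (R2 t) p1 p2 p3 Hka Hkb (HQso t Ht)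
                (HSO1 t Ht) (HSO2 t Ht) Hnd12) as (HP0 & Hup & Hlow).
    apply potential_error_equivalence; auto. apply dot_ge0.
Qed.
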